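(* Let $A\subseteq[n]^2$, let $\Gamma=\Gamma(A)$ be the gate defined below, and let $x\in\{0,1\}^{4n}$ satisfy $\varphi_{one}(x)$. (i) If $x_W\ne x_E$ or $\mathrm{hw}(x_S)\ne1$, then $\mathrm{Sig}(\Gamma,x)=0$. (ii) If $\varphi_{prop}(x)$ holds, let $u=x_W$, $v=x_N$. Then $\mathrm{Sig}(\Gamma,x)=q_u-r_{u,v}-s_{u,v}-\alpha_{u,v}-\beta_{u,v}$ if $(u,v)\notin A$, and $\mathrm{Sig}(\Gamma,x)=q_u-r_{u,v}-s_{u,v}+1$ if $(u,v)\in A$. (iii) If $x_W=x_E$, $\mathrm{hw}(x_S)=1$ and $x_N\ne x_S$, let $u=x_W$, $v=x_N$, $w=x_S$. Then $\mathrm{Sig}(\Gamma,x)$ equals $p_{u,v,w}$ if $(u,v)\notin A,(u,w)\notin A$; $p_{u,v,w}+\alpha_{u,v}-\beta_{u,v}$ if $(u,v)\notin A,(u,w)\in A$; $p_{u,v,w}+\beta_{u,w}-\alpha_{u,w}$ if $(u,v)\in A,(u,w)\notin A$; and $p_{u,v,w}+\beta_{u,w}-\alpha_{u,w}+\alpha_{u,v}-\beta_{u,v}+1$ if $(u,v)\in A,(u,w)\in A$.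
   Context: $\Gamma(A)$: vertices $b_{i,j}$, $(i,j)\in[n]^2$, with the south edge of $b_{i,j}$ equal to the north edge of $b_{i+1,j}$ and the east edge of $b_{i,j}$ equal to the west edge of $b_{i,j+1}$; $4n$ dangling edges ordered as north edges of row $1$ (columns $1..n$), east edges of column $n$ (rows $1..n$), south edges of row $n$, west edges of column $1$; $x=x_Nx_Ex_Sx_W$ accordingly, and a weight-one string $0^{v-1}10^{n-v}\in\{0,1\}^n$ is identified with $v\in[n]$. Two apices $a_1,a_2$ with signature $\mathtt{HW}_{=1}$ (value $1$ iff exactly one incident edge active). For $\tau\notin A$, $b_\tau$ has signature $\mathtt{PASS}$; for $\tau\in A$, $b_\tau$ is also joined to $a_1$ and $a_2$ (its 5th and 6th edges) and has signature $\mathtt{PRE}$. All edge weights $1$. For $x\in\{0,1\}^4$ ordered north, east, south, west: $\mathtt{PASS}(1111)=-1$, $\mathtt{PASS}(0000)=\mathtt{PASS}(0101)=\mathtt{PASS}(1010)=1$, else $0$. For $x\in\{0,1\}^4,y\in\{0,1\}^2$: $\mathtt{PRE}(x00)=\mathtt{PASS}(x)$; $\mathtt{PRE}(xy)=1$ for $xy\in\{101011,111111,100001,110101,001010,011110\}$; else $0$. $\varphi_{one}(x)\equiv\mathrm{hw}(x_N)=\mathrm{hw}(x_W)=1$; $\varphi_{prop}(x)\equiv x_N=x_S\wedge x_W=x_E$. For $u,v\in[n]$: $\alpha_{u,v}=|A\cap\{(1,v),\dots,(u-1,v)\}|$, $\beta_{u,v}=|A\cap\{(u+1,v),\dots,(n,v)\}|$;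 $q_u=\sum_{z\in[n]}\big(\alpha_{u,z}\beta_{u,z}-\binom{\alpha_{u,z}}2-\binom{\beta_{u,z}}2\big)$; $p_{u,v,w}=(\alpha_{u,v}-\beta_{u,v})(\beta_{u,w}-\alpha_{u,w})$; $r_{u,v}=\sum_{z\in[n]\setminus\{v\},(u,z)\in A}\beta_{u,z}$; $s_{u,v}=\sum_{z\in[n]\setminus\{v\},(u,z)\in A}\alpha_{u,z}$. $\mathrm{Sig}(\Gamma,x)=\sum_y w_\Gamma(xy)\prod_v f_v((xy)|_{I(v)})$ over assignments $y$ to the non-dangling edges. *)

From HB Require Import structures.
From mathcomp Require Import all_boot all_order all_algebra.
Set Implicit Arguments. Unset Strict Implicit. Unset Printing Implicit Defensive.
Import Order.TTheory GRing.Theory Num.Theory.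
Local Open Scope ring_scope.

(* Indices [n] = {1..n} are represented 0-based by 'I_n.
   Bit strings in {0,1}^n are finite functions 'I_n -> bool. *)

Definition hw (n : nat) (s : {ffun 'I_n -> bool}) : nat := #|[set i | s i]|.

Definition onehot (n : nat) (v : 'I_n) : {ffun 'I_n -> bool} := [ffun i => i == v].

Definition b2i (b : bool) : int := if b then 1 else 0.

Definition PASS (N E S W : bool) : int :=
  match N, E, S, W with
  | true, true, true, true => -1
  | false, false, false, false => 1
  | false, true, false, true => 1
  | true, false, true, false => 1
  | _, _, _, _ => 0
  end.

Definition PRE (N E S W y1 y2 : bool) : int :=
  match y1, y2 with
  | false, false => PASS N E S W
  | true, true =>
      match N, E, S, W with
      | true, false, true, false => 1
      | true, true, true, true => 1
      | _, _, _, _ => 0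
      end
  | false, true =>
      match N, E, S, W with
      | true, false, false, false => 1
      | true, true, false, true => 1
      | _, _, _, _ => 0
      end
  | true, false =>
      match N, E, S, W with
      | false, false, true, false => 1
      | false, true, true, true => 1
      | _, _, _, _ => 0
      end
  end.

Definition HW1 (n : nat) (E : {ffun 'I_n * 'I_n -> bool}) : int :=
  b2i (#|[set t | E t]| == 1)%N.

(* Edge variables:
   - Hz (i, j), i : 'I_n, j : 'I_n.+1 : the horizontal edge in row i left of column j,
     i.e. the west edge of b_{i,j} (= east edge of b_{i,j-1});
     Hz (i, 0) is the dangling west edge and Hz (i, n) the dangling east edge of row i.
   - Vt (i, j), i : 'I_n.+1, j : 'I_n : the vertical edge in column j above row i,
     i.e. the north edge of b_{i,j} (= south edge of b_{i-1,j});
     Vt (0, j) is the dangling north edge and Vt (n, j) the dangling south edge.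
   - E1 t, E2 t : the edges from b_t to the apices a_1, a_2 (existing only for t in A). *)

Definition up (n : nat) (i : 'I_n) : 'I_n.+1 := widen_ord (leqnSn n) i.
Definition dn (n : nat) (i : 'I_n) : 'I_n.+1 := lift ord0 i.

Definition boundary_ok (n : nat) (A : {set 'I_n * 'I_n})
  (xN xE xS xW : {ffun 'I_n -> bool})
  (Hz : {ffun 'I_n * 'I_n.+1 -> bool}) (Vt : {ffun 'I_n.+1 * 'I_n -> bool})
  (E1 E2 : {ffun 'I_n * 'I_n -> bool}) : bool :=
  [forall i : 'I_n, (Hz (i, ord0) == xW i) && (Hz (i, ord_max) == xE i)] &&
  [forall j : 'I_n, (Vt (ord0, j) == xN j) && (Vt (ord_max, j) == xS j)] &&
  [forall t, (t \notin A) ==> (~~ E1 t && ~~ E2 t)].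

Definition vertex_val (n : nat) (A : {set 'I_n * 'I_n})
  (Hz : {ffun 'I_n * 'I_n.+1 -> bool}) (Vt : {ffun 'I_n.+1 * 'I_n -> bool})
  (E1 E2 : {ffun 'I_n * 'I_n -> bool}) (t : 'I_n * 'I_n) : int :=
  let i := t.1 in let j := t.2 in
  let N := Vt (up i, j) in
  let E := Hz (i, dn j) in
  let S := Vt (dn i, j) in
  let W := Hz (i, up j) in
  if t \in A then PRE N E S W (E1 t) (E2 t) else PASS N E S W.

Definition Sig (n : nat) (A : {set 'I_n * 'I_n}) (xN xE xS xW : {ffun 'I_n -> bool}) : int :=
  \sum_(Hz : {ffun 'I_n * 'I_n.+1 -> bool})
  \sum_(Vt : {ffun 'I_n.+1 * 'I_n -> bool})
  \sum_(E1 : {ffun 'I_n * 'I_n -> bool})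
  \sum_(E2 : {ffun 'I_n * 'I_n -> bool} | boundary_ok A xN xE xS xW Hz Vt E1 E2)
    (HW1 E1 * HW1 E2 * \prod_(t : 'I_n * 'I_n) vertex_val A Hz Vt E1 E2 t).

Definition phi_one (n : nat) (xN xW : {ffun 'I_n -> bool}) : Prop :=
  hw xN = 1%N /\ hw xW = 1%N.

Definition phi_prop (n : nat) (xN xE xS xW : {ffun 'I_n -> bool}) : Prop :=
  xN = xS /\ xW = xE.

Definition alpha (n : nat) (A : {set 'I_n * 'I_n}) (u v : 'I_n) : nat :=
  #|[set i : 'I_n | (i < u)%N && ((i, v) \in A)]|.
Definition beta (n : nat) (A : {set 'I_n * 'I_n}) (u v : 'I_n) : nat :=
  #|[set i : 'I_n | (u < i)%N && ((i, v) \in A)]|.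

Definition qq (n : nat) (A : {set 'I_n * 'I_n}) (u : 'I_n) : int :=
  \sum_(z : 'I_n) ((alpha A u z * beta A u z)%:Z - ('C(alpha A u z, 2))%:Z
                   - ('C(beta A u z, 2))%:Z).

Definition pp (n : nat) (A : {set 'I_n * 'I_n}) (u v w : 'I_n) : int :=
  ((alpha A u v)%:Z - (beta A u v)%:Z) * ((beta A u w)%:Z - (alpha A u w)%:Z).

Definition rr (n : nat) (A : {set 'I_n * 'I_n}) (u v : 'I_n) : int :=
  \sum_(z : 'I_n | (z != v) && ((u, z) \in A)) (beta A u z)%:Z.

Definition ss (n : nat) (A : {set 'I_n * 'I_n}) (u v : 'I_n) : int :=
  \sum_(z : 'I_n | (z != v) && ((u, z) \in A)) (alpha A u z)%:Z.

From HB Require Import structures.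
From mathcomp Require Import all_boot all_order all_algebra.
From mathcomp Require Import zify ring.
Import Order.TTheory GRing.Theory Num.Theory.
Local Open Scope ring_scope.
Set Implicit Arguments. Unset Strict Implicit.

Lemma sum_b2i_eq (T : finType) (a : T) (F : T -> int) :
  \sum_(x : T) b2i (x == a) * F x = F a.
Proof.
by rewrite (bigD1 a) //= eqxx mul1r big1 ?addr0 // => x /negbTE ->; rewrite mul0r.
Qed.

Lemma b2iT : b2i true = 1. Proof. by []. Qed.
Lemma b2iF : b2i false = 0. Proof. by []. Qed.

Lemma b2iM (b c : bool) : b2i (b && c) = b2i b * b2i c.
Proof. by case: b; case: c; rewrite /= ?mulr1 ?mulr0. Qed.

Lemma prod_b2i (T : finType) (P : pred T) : \prod_(t : T) b2i (P t) = b2i [forall t, P t].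
Proof.
have [/forallP allP | ] := boolP [forall t, P t]; first by rewrite big1 // => t _; rewrite allP.
by rewrite negb_forall => /existsP[t /negbTE Pt]; rewrite (bigD1 t) //= Pt mul0r.
Qed.

Lemma sum_mul_sum (T : finType) (f g : T -> int) :
  \sum_(a1 : T) \sum_(a2 : T) f a1 * g a2 = (\sum_a f a) * (\sum_a g a).
Proof. by rewrite mulr_suml; apply: eq_bigr => a1 _; rewrite mulr_sumr. Qed.

Lemma exchange_big22 (T1 T2 T3 T4 : finType) (F : T1 -> T2 -> T3 -> T4 -> int) :
  \sum_(a : T1) \sum_(b : T2) \sum_(c : T3) \sum_(d : T4) F a b c d =
  \sum_(c : T3) \sum_(d : T4) \sum_(a : T1) \sum_(b : T2) F a b c d.
Proof.
rewrite (eq_bigr (fun a => \sum_(c : T3) \sum_(d : T4) \sum_(b : T2) F a b c d)).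
  by rewrite exchange_big; apply: eq_bigr => c _; rewrite exchange_big.
by move=> a _; rewrite exchange_big; apply: eq_bigr => c _; rewrite exchange_big.
Qed.

Lemma sum_pair n (G : 'I_n * 'I_n -> int) :
  \sum_(t : 'I_n * 'I_n) G t = \sum_(a : 'I_n) \sum_(j : 'I_n) G (a, j).
Proof. by rewrite (pair_bigA _ (fun a j => G (a, j))); apply: eq_bigr => -[]. Qed.

Lemma sum_in_column n (A : {set 'I_n * 'I_n}) (z : 'I_n) (h : 'I_n -> int) :
  \sum_(t : 'I_n * 'I_n) b2i (t \in A) * (b2i (t.2 == z) * h t.1) =
  \sum_(a : 'I_n) b2i ((a, z) \in A) * h a.
Proof.
rewrite sum_pair; apply: eq_bigr => a _.
by rewrite (eq_bigr (fun j => b2i (j == z) * (b2i ((a, j) \in A) * h a))) ?sum_b2i_eq // => j _; ring.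
Qed.

Lemma onehot_inj n : injective (@onehot n).
Proof. by move=> a b /ffunP/(_ a); rewrite !ffunE eqxx => /esym/eqP. Qed.

Lemma onehot_eq n (a b : 'I_n) : (onehot a == onehot b) = (a == b).
Proof. by apply/eqP/eqP => [/onehot_inj|->]. Qed.

Lemma hw_onehot n (v : 'I_n) : hw (onehot v) = 1%N.
Proof. by rewrite /hw -(cards1 v); apply: eq_card => i; rewrite !inE ffunE. Qed.

Lemma hw1P n (s : {ffun 'I_n -> bool}) : hw s = 1%N -> exists v, s = onehot v.
Proof.
move=> /eqP/cards1P[v sv]; exists v; apply/ffunP => i.
by move/setP: sv => /(_ i); rewrite !inE ffunE.
Qed.

(* A vertex vanishes unless it passes its horizontal edge straight through; vertically an
   a_1 edge switches its column on and an a_2 edge switches it off, and PASS(1111) = -1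
   puts a sign on every crossing of an active row with an active column. *)
Definition flow_step (N y1 y2 : bool) : bool := (N && ~~ y2) || y1.

Definition vertical_ok (N S y1 y2 : bool) : bool :=
  match y1, y2 with
  | false, false => S == N
  | true, true => N && S
  | false, true => N && ~~ S
  | true, false => ~~ N && S
  end.

Lemma vertical_ok_step N S y1 y2 : vertical_ok N S y1 y2 -> S = flow_step N y1 y2.
Proof. by case: N; case: S; case: y1; case: y2. Qed.

Lemma signatureE (inA N E S W y1 y2 : bool) : (~~ inA -> ~~ y1 && ~~ y2) ->
  (if inA then PRE N E S W y1 y2 else PASS N E S W) =
  if E == W then b2i (vertical_ok N S y1 y2) * (if [&& E, N, S, ~~ y1 & ~~ y2] then -1 else 1)
  else 0.
Proof.
by case: inA => [_|/(_ isT)/andP[/negbTE-> /negbTE->]];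
  case: N; case: E; case: S; case: W; try case: y1; try case: y2.
Qed.

Section ApexEdges.
Variable n : nat.
Implicit Types (E : {ffun 'I_n * 'I_n -> bool}) (t : 'I_n * 'I_n) (A : {set 'I_n * 'I_n}).

Definition single t : {ffun 'I_n * 'I_n -> bool} := [ffun s => s == t].

Lemma HW1E E : HW1 E = \sum_t b2i (E == single t).
Proof.
rewrite /HW1; have [/cards1P[t Et] | E1] := boolP (#|[set s | E s]| == 1%N).
  have -> : E = single t by apply/ffunP => s; move/setP: Et => /(_ s); rewrite !inE ffunE.
  rewrite (bigD1 t) //= eqxx big1 ?addr0 // => s st.
  by case: eqP => // /ffunP/(_ t); rewrite !ffunE eqxx => /esym/eqP ts; rewrite ts eqxx in st.
rewrite big1 // => t _; case: eqP => // Et; move: E1; rewrite Et.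
suff -> : [set s | single t s] = [set t] by rewrite cards1.
by apply/setP => s; rewrite !inE ffunE.
Qed.

Lemma sum_HW1 (F : {ffun 'I_n * 'I_n -> bool} -> int) :
  \sum_E HW1 E * F E = \sum_t F (single t).
Proof.
under eq_bigr => E _ do rewrite HW1E mulr_suml.
rewrite exchange_big /=; apply: eq_bigr => t _.
by rewrite -(sum_b2i_eq (single t) F).
Qed.

Definition apex_ok A E1 E2 := [forall t, (t \notin A) ==> ~~ E1 t && ~~ E2 t].

Lemma apex_ok_single A t1 t2 : apex_ok A (single t1) (single t2) = (t1 \in A) && (t2 \in A).
Proof.
apply/forallP/andP => [ok|[t1A t2A] t]; last first.
  by apply/implyP; rewrite !ffunE; apply: contraNT; case/nandP => /negbNE/eqP->.
by split; apply/negPn/negP => /(implyP (ok _)); rewrite !ffunE eqxx ?andbF.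
Qed.

Definition grid_ok (xN xE xS xW : {ffun 'I_n -> bool})
  (Hz : {ffun 'I_n * 'I_n.+1 -> bool}) (Vt : {ffun 'I_n.+1 * 'I_n -> bool}) : bool :=
  [forall i : 'I_n, (Hz (i, ord0) == xW i) && (Hz (i, ord_max) == xE i)] &&
  [forall j : 'I_n, (Vt (ord0, j) == xN j) && (Vt (ord_max, j) == xS j)].

Definition grid_sum A (xN xE xS xW : {ffun 'I_n -> bool}) E1 E2 : int :=
  \sum_(Hz : {ffun 'I_n * 'I_n.+1 -> bool}) \sum_(Vt : {ffun 'I_n.+1 * 'I_n -> bool})
   b2i (grid_ok xN xE xS xW Hz Vt) * \prod_t vertex_val A Hz Vt E1 E2 t.

Lemma Sig_apexE A xN xE xS xW :
  Sig A xN xE xS xW = \sum_t1 \sum_t2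
     b2i ((t1 \in A) && (t2 \in A)) * grid_sum A xN xE xS xW (single t1) (single t2).
Proof.
rewrite /Sig (eq_bigr (fun Hz => \sum_Vt \sum_E1 \sum_E2 HW1 E1 * (HW1 E2 *
   (b2i (apex_ok A E1 E2) * (b2i (grid_ok xN xE xS xW Hz Vt) *
      \prod_t vertex_val A Hz Vt E1 E2 t))))); last first.
  move=> Hz _; apply: eq_bigr => Vt _; apply: eq_bigr => E1 _; rewrite big_mkcond /=.
  apply: eq_bigr => E2 _.
  have -> : boundary_ok A xN xE xS xW Hz Vt E1 E2 =
    grid_ok xN xE xS xW Hz Vt && apex_ok A E1 E2 by [].
  by case: grid_ok; case: apex_ok; rewrite /b2i /=; ring.
rewrite exchange_big22 (eq_bigr (fun E1 => HW1 E1 * \sum_E2 HW1 E2 *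
   (b2i (apex_ok A E1 E2) * grid_sum A xN xE xS xW E1 E2))); last first.
  move=> E1 _; rewrite mulr_sumr; apply: eq_bigr => E2 _.
  rewrite /grid_sum !mulr_sumr; apply: eq_bigr => Hz _; rewrite !mulr_sumr.
  by apply: eq_bigr => Vt _; rewrite !mulrA.
rewrite sum_HW1; apply: eq_bigr => t1 _; rewrite sum_HW1; apply: eq_bigr => t2 _.
by rewrite apex_ok_single.
Qed.

End ApexEdges.

Ltac case_order := repeat (match goal with
 | |- context [(?x <= ?y)%N] => case: (leqP x y) => ?
 | |- context [(?x == ?y :> nat)] => case: (eqVneq x y) => ?
 | |- context [if ?b then _ else _] => case: b
 end; simpl); try lia.

(* The state of the vertical edge above row k in column j: the a_1 edge at t1 switches the
   column on, the a_2 edge at t2 switches it off, and if both lie above row k the lower one wins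
   (ties count as absorb-then-inject, as PRE(111111) prescribes). *)
Definition col_state n (xN : {ffun 'I_n -> bool}) (t1 t2 : 'I_n * 'I_n) (k : nat) (j : 'I_n) :=
  let on1 := (j == t1.2) && (t1.1 < k)%N in
  let on2 := (j == t2.2) && (t2.1 < k)%N in
  if on1 && on2 then (t2.1 <= t1.1)%N else if on1 then true else if on2 then false else xN j.

Lemma col_state0 n xN t1 t2 j : @col_state n xN t1 t2 0 j = xN j.
Proof. by rewrite /col_state !andbF. Qed.

Lemma col_stateS n xN t1 t2 (i j : 'I_n) :
  @col_state n xN t1 t2 i.+1 j =
  flow_step (col_state xN t1 t2 i j) ((i, j) == t1) ((i, j) == t2).
Proof.
case: t1 t2 => [a1 j1] [a2 j2]; rewrite /col_state /flow_step /= !xpair_eqE -!val_eqE /=.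
move: (val j == val j1) (val j == val j2) (xN j) => b1 b2 x.
by case: b1; case: b2; rewrite /= ?andbF ?andbT ?orbF; case_order.
Qed.

Section ForcedFlow.
Variables (n : nat) (A : {set 'I_n * 'I_n}) (xN xE xS xW : {ffun 'I_n -> bool}).
Variables (t1 t2 : 'I_n * 'I_n).
Hypotheses (t1A : t1 \in A) (t2A : t2 \in A).

Definition row_flow : {ffun 'I_n * 'I_n.+1 -> bool} := [ffun p : 'I_n * 'I_n.+1 => xW p.1].
Definition col_flow : {ffun 'I_n.+1 * 'I_n -> bool} :=
  [ffun p : 'I_n.+1 * 'I_n => col_state xN t1 t2 p.1 p.2].

Definition vertex_ok (t : 'I_n * 'I_n) :=
  vertical_ok (col_state xN t1 t2 t.1 t.2) (col_state xN t1 t2 t.1.+1 t.2) (t == t1) (t == t2).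

Definition crossing_sign (t : 'I_n * 'I_n) : int :=
  if [&& xW t.1, col_state xN t1 t2 t.1 t.2, col_state xN t1 t2 t.1.+1 t.2, t != t1 & t != t2]
  then -1 else 1.

Lemma vertex_val_single Hz Vt t : vertex_val A Hz Vt (single t1) (single t2) t =
  let i := t.1 in let j := t.2 in
  let N := Vt (up i, j) in let E := Hz (i, dn j) in
  let S := Vt (dn i, j) in let W := Hz (i, up j) in
  if E == W then b2i (vertical_ok N S (single t1 t) (single t2 t)) *
     (if [&& E, N, S, ~~ single t1 t & ~~ single t2 t] then -1 else 1) else 0.
Proof.
apply: signatureE => tA; rewrite !ffunE.
by apply/andP; split; apply: contraNN tA => /eqP->.
Qed.

Section Nonzero.
Variables (Hz : {ffun 'I_n * 'I_n.+1 -> bool}) (Vt : {ffun 'I_n.+1 * 'I_n -> bool}).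
Hypotheses (okHV : grid_ok xN xE xS xW Hz Vt)
  (nz : forall t, vertex_val A Hz Vt (single t1) (single t2) t != 0).

Lemma forced_rows : Hz = row_flow.
Proof.
have west i : Hz (i, ord0) = xW i.
  by case/andP: okHV => /forallP/(_ i)/andP[/eqP].
suff key i k (lt_kn : (k < n.+1)%N) : Hz (i, Ordinal lt_kn) = xW i.
  by apply/ffunP => -[i [k lt_kn]]; rewrite ffunE key.
elim: k lt_kn => [|k IHk] lt_kn; first by rewrite -west; congr (Hz (_, _)); apply: val_inj.
have lt_kn' : (k < n)%N by [].
have := nz (i, Ordinal lt_kn'); rewrite vertex_val_single /=.
have -> : dn (Ordinal lt_kn') = Ordinal lt_kn by apply: val_inj.
have -> : up (Ordinal lt_kn') = Ordinal (ltnW lt_kn) by apply: val_inj.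
by rewrite IHk; case: (Hz (i, Ordinal lt_kn) =P xW i) => [-> //|_]; rewrite eqxx.
Qed.

Lemma forced_cols : Vt = col_flow.
Proof.
have north j : Vt (ord0, j) = xN j.
  by case/andP: okHV => _ /forallP/(_ j)/andP[/eqP].
suff key j k (lt_kn : (k < n.+1)%N) : Vt (Ordinal lt_kn, j) = col_state xN t1 t2 k j.
  by apply/ffunP => -[[k lt_kn] j]; rewrite ffunE key.
elim: k lt_kn => [|k IHk] lt_kn.
  by rewrite col_state0 -north; congr (Vt (_, _)); apply: val_inj.
have lt_kn' : (k < n)%N by [].
have := nz (Ordinal lt_kn', j); rewrite vertex_val_single /=.
have -> : dn (Ordinal lt_kn') = Ordinal lt_kn by apply: val_inj.
have -> : up (Ordinal lt_kn') = Ordinal (ltnW lt_kn) by apply: val_inj.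
rewrite IHk; case: ifP => _; last by rewrite eqxx.
case ok: vertical_ok; last by rewrite mul0r eqxx.
by move=> _; rewrite (vertical_ok_step ok) !ffunE -(col_stateS xN t1 t2 (Ordinal lt_kn') j).
Qed.

End Nonzero.

Lemma grid_ok_flow : grid_ok xN xE xS xW row_flow col_flow =
  (xW == xE) && ([ffun j => col_state xN t1 t2 n j] == xS).
Proof.
congr andb.
- apply/forallP/eqP => [ok|<- i]; last by rewrite !ffunE !eqxx.
  by apply/ffunP => i; case/andP: (ok i); rewrite !ffunE => _ /eqP.
- apply/forallP/eqP => [ok|<- j]; last by rewrite !ffunE col_state0 !eqxx.
  by apply/ffunP => j; case/andP: (ok j); rewrite !ffunE => _ /eqP.
Qed.

Lemma grid_term_eq0 Hz Vt : (Hz, Vt) != (row_flow, col_flow) ->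
  b2i (grid_ok xN xE xS xW Hz Vt) * \prod_t vertex_val A Hz Vt (single t1) (single t2) t = 0.
Proof.
move=> ne; have [okHV|] := boolP (grid_ok xN xE xS xW Hz Vt); last by rewrite mul0r.
rewrite mul1r; apply/eqP/negPn/negP => nz; move: ne.
have nz_t t : vertex_val A Hz Vt (single t1) (single t2) t != 0.
  by apply: contraNN nz => /eqP z; rewrite (bigD1 t) //= z mul0r.
by rewrite (forced_rows okHV nz_t) (forced_cols okHV nz_t) eqxx.
Qed.

Lemma grid_sum_single : grid_sum A xN xE xS xW (single t1) (single t2) =
  b2i (xW == xE) * b2i ([ffun j => col_state xN t1 t2 n j] == xS) *
  \prod_t (b2i (vertex_ok t) * crossing_sign t).
Proof.
set C := (RHS).
have term Hz Vt : b2i (grid_ok xN xE xS xW Hz Vt) *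
    \prod_t vertex_val A Hz Vt (single t1) (single t2) t =
  b2i (Hz == row_flow) * (b2i (Vt == col_flow) * C).
  have [[-> ->] | ne] := eqVneq (Hz, Vt) (row_flow, col_flow); last first.
    rewrite grid_term_eq0 //; move: ne; rewrite xpair_eqE negb_and.
    by case/orP => /negbTE->; rewrite ?mul0r ?mulr0.
  rewrite !eqxx !mul1r grid_ok_flow /C.
  case: (xW == xE); case: (_ == xS); rewrite ?mul0r ?mul1r //.
  apply: eq_bigr => -[i j] _; rewrite vertex_val_single /= !ffunE /= eqxx.
  by rewrite /vertex_ok /crossing_sign.
rewrite /grid_sum (eq_bigr (fun Hz => b2i (Hz == row_flow) * C)); first by rewrite sum_b2i_eq.
move=> Hz _; rewrite (eq_bigr (fun Vt => b2i (Vt == col_flow) * (b2i (Hz == row_flow) * C))).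
  by rewrite sum_b2i_eq.
by move=> Vt _; rewrite term mulrCA.
Qed.

End ForcedFlow.

Section OneHotBoundary.
Variables (n : nat) (u v : 'I_n).

(* With a single active column v on top, either both apex edges lie in one column (a hole cut
   into column v, or a segment in an idle column), or the unit coming down column v is absorbed
   at t2 and re-injected in another column at t1. *)
Definition admissible (t1 t2 : 'I_n * 'I_n) : bool :=
  let: (a1, j1) := t1 in let: (a2, j2) := t2 in
  if j1 == j2 then (if j1 == v then (a2 <= a1)%N else (a1 < a2)%N) else j2 == v.

Definition exit_string (t1 t2 : 'I_n * 'I_n) : {ffun 'I_n -> bool} :=
  if t1.2 == t2.2 then onehot v else onehot t1.2.

(* One factor -1 for each crossing of row u with an active column: column v while it stays
   active, and the segment between t1 and t2. *)
Definition row_sign (t1 t2 : 'I_n * 'I_n) : int :=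
  let: (a1, j1) := t1 in let: (a2, j2) := t2 in
  if j1 == j2 then
    if j1 == v then (if (a2 <= u <= a1)%N then 1 else -1)
    else (if (a1 < u < a2)%N then 1 else -1)
  else (if (a1 < u)%N then -1 else 1) * (if (u < a2)%N then -1 else 1).

Lemma vertex_ok_apex (t1 t2 : 'I_n * 'I_n) :
  vertex_ok (onehot v) t1 t2 t1 && vertex_ok (onehot v) t1 t2 t2 = admissible t1 t2.
Proof.
rewrite /vertex_ok /admissible /col_state; case: t1 t2 => [a1 j1] [a2 j2] /=.
by rewrite !ffunE !eqxx /= !xpair_eqE -!val_eqE /=; case_order.
Qed.

Lemma all_vertex_ok (t1 t2 : 'I_n * 'I_n) : [forall t, vertex_ok (onehot v) t1 t2 t] = admissible t1 t2.
Proof.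
rewrite -vertex_ok_apex; apply/forallP/andP => [ok|[ok1 ok2] t]; first by split; apply: ok.
have [->//|ne1] := eqVneq t t1; have [->//|ne2] := eqVneq t t2.
rewrite /vertex_ok; case: t ne1 ne2 => i j ne1 ne2 /=.
by rewrite (col_stateS _ _ _ i j) /flow_step (negbTE ne1) (negbTE ne2) andbT orbF /= eqxx.
Qed.

Lemma col_state_exit (t1 t2 : 'I_n * 'I_n) : admissible t1 t2 ->
  [ffun j => col_state (onehot v) t1 t2 n j] = exit_string t1 t2.
Proof.
move=> ok; apply/ffunP => j; move: ok.
rewrite /admissible /exit_string /col_state; case: t1 t2 => [a1 j1] [a2 j2] /=.
rewrite (fun_if (fun f : {ffun 'I_n -> bool} => f j)) !ffunE /= -!val_eqE /=.
by have := ltn_ord a1; have := ltn_ord a2; case_order.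
Qed.

Lemma prod_crossing_sign_row (t1 t2 : 'I_n * 'I_n) :
  \prod_t crossing_sign (onehot v) (onehot u) t1 t2 t =
  \prod_(j : 'I_n) crossing_sign (onehot v) (onehot u) t1 t2 (u, j).
Proof.
rewrite (eq_bigr (fun t => crossing_sign (onehot v) (onehot u) t1 t2 (t.1, t.2))); last by case.
rewrite -(pair_bigA _ (fun i j => crossing_sign (onehot v) (onehot u) t1 t2 (i, j))).
rewrite (bigD1 u) //= [X in _ * X]big1 ?mulr1 // => i /negbTE ne.
by rewrite big1 // => j _; rewrite /crossing_sign /= ffunE ne.
Qed.

Lemma crossing_sign_idle (t1 t2 : 'I_n * 'I_n) j : j != t1.2 -> j != t2.2 ->
  crossing_sign (onehot v) (onehot u) t1 t2 (u, j) = if j == v then -1 else 1.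
Proof.
case: t1 t2 => [a1 j1] [a2 j2] /= ne1 ne2.
rewrite /crossing_sign /col_state /= !ffunE eqxx !xpair_eqE (negbTE ne1) (negbTE ne2).
by rewrite !andbF /=; case: (j == v).
Qed.

Lemma crossing_sign_same (a1 a2 z : 'I_n) : admissible (a1, z) (a2, z) ->
  crossing_sign (onehot v) (onehot u) (a1, z) (a2, z) (u, z) =
  if z == v then (if (a2 <= u <= a1)%N then 1 else -1) else (if (a1 < u < a2)%N then -1 else 1).
Proof.
rewrite /admissible /crossing_sign /col_state /= !ffunE !eqxx !xpair_eqE eqxx !andbT /=.
by case: (z == v); rewrite -!val_eqE /=; case_order.
Qed.

Lemma crossing_sign_moved (a1 a2 j1 : 'I_n) : j1 != v ->
  crossing_sign (onehot v) (onehot u) (a1, j1) (a2, v) (u, j1) = (if (a1 < u)%N then -1 else 1) /\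
  crossing_sign (onehot v) (onehot u) (a1, j1) (a2, v) (u, v) = (if (u < a2)%N then -1 else 1).
Proof.
move=> ne; rewrite /crossing_sign /col_state /= !ffunE !eqxx !xpair_eqE [v == j1]eq_sym.
by rewrite (negbTE ne) /= ?andbT ?andbF -!val_eqE /=; split; case_order.
Qed.

Lemma prod_crossing_sign (t1 t2 : 'I_n * 'I_n) : admissible t1 t2 ->
  \prod_t crossing_sign (onehot v) (onehot u) t1 t2 t = row_sign t1 t2.
Proof.
rewrite prod_crossing_sign_row; case: t1 t2 => [a1 j1] [a2 j2].
have [<- {j2} | ne12] := eqVneq j1 j2 => ok.
  rewrite (bigD1 j1) //= crossing_sign_same // /row_sign eqxx.
  rewrite (eq_bigr (fun j => if j == v then -1 else 1)); last first.
    by move=> j ne; rewrite crossing_sign_idle.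
  have [<- | ne] := eqVneq j1 v; first by rewrite big1 ?mulr1 // => j /negbTE->.
  rewrite (bigD1 v) 1?eq_sym // eqxx big1 => [|j /andP[_ /negbTE->] //].
  by case: ifP; rewrite ?mulr1 ?mulrN1 ?opprK.
move: ok; rewrite /admissible (negbTE ne12) => /eqP ej2; subst j2.
have [s1 s2] := crossing_sign_moved a1 a2 ne12.
rewrite /row_sign (negbTE ne12) (bigD1 j1) //= (bigD1 v) /=; last by rewrite eq_sym.
rewrite s1 s2 big1 ?mulr1 // => j /andP[ne1 ne2].
by rewrite crossing_sign_idle // (negbTE ne2).
Qed.

Definition flow_weight (xS : {ffun 'I_n -> bool}) (t1 t2 : 'I_n * 'I_n) : int :=
  b2i (admissible t1 t2) * b2i (exit_string t1 t2 == xS) * row_sign t1 t2.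

Lemma Sig_onehotE (A : {set 'I_n * 'I_n}) xE xS :
  Sig A (onehot v) xE xS (onehot u) = \sum_t1 \sum_t2
    b2i (t1 \in A) * b2i (t2 \in A) * (b2i (onehot u == xE) * flow_weight xS t1 t2).
Proof.
rewrite Sig_apexE; apply: eq_bigr => t1 _; apply: eq_bigr => t2 _.
rewrite b2iM; have [t1A|_] := boolP (t1 \in A); last by rewrite b2iF !mul0r.
have [t2A|_] := boolP (t2 \in A); last by rewrite b2iF mulr0 !mul0r.
rewrite grid_sum_single // big_split /= prod_b2i all_vertex_ok /flow_weight.
have [ok|_] := boolP (admissible t1 t2); last by rewrite b2iF !(mulr0, mul0r).
by rewrite (col_state_exit ok) (prod_crossing_sign ok) b2iT !mul1r mulrA.
Qed.

Lemma Sig_onehot_eq0 (A : {set 'I_n * 'I_n}) xE xS :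
  (onehot u != xE \/ hw xS != 1%N) -> Sig A (onehot v) xE xS (onehot u) = 0.
Proof.
move=> nz; rewrite Sig_onehotE big1 // => t1 _; rewrite big1 // => t2 _.
case: nz => [/negbTE-> | hwS]; first by rewrite b2iF !(mul0r, mulr0).
rewrite /flow_weight; case: (exit_string t1 t2 =P xS) => [eS|_]; last by rewrite b2iF !(mul0r, mulr0).
by move: hwS; rewrite -eS /exit_string; case: ifP; rewrite hw_onehot.
Qed.

End OneHotBoundary.

Section Counting.
Variable n : nat.
Implicit Types (s : 'I_n -> bool) (u : 'I_n).

Definition countz s : int := \sum_(a : 'I_n) b2i (s a).

Lemma card_countz s : (#|[set a | s a]|)%:Z = countz s.
Proof.
rewrite /countz -sum1_card -natz natr_sum big_mkcond /=; apply: eq_bigr => a _.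
by rewrite inE; case: (s a).
Qed.

Lemma countz_split s u :
  countz s = countz (fun a => (a < u)%N && s a) + countz (fun a => (u < a)%N && s a) + b2i (s u).
Proof.
rewrite /countz -(sum_b2i_eq u (fun a => b2i (s a))) -!big_split /=; apply: eq_bigr => a _.
by rewrite -val_eqE /=; case: ltngtP; case: (s a); rewrite ?b2iT ?b2iF ?mul0r ?mul1r ?addr0 ?add0r.
Qed.

Lemma countz_le s u :
  countz (fun a => (a <= u)%N && s a) = countz (fun a => (a < u)%N && s a) + b2i (s u).
Proof.
rewrite /countz -(sum_b2i_eq u (fun a => b2i (s a))) -!big_split /=; apply: eq_bigr => a _.
by rewrite -val_eqE /=; case: ltngtP; case: (s a); rewrite ?b2iT ?b2iF ?mul0r ?mul1r ?addr0 ?add0r.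
Qed.

Lemma countz_ge s u :
  countz (fun a => (u <= a)%N && s a) = countz (fun a => (u < a)%N && s a) + b2i (s u).
Proof.
rewrite /countz -(sum_b2i_eq u (fun a => b2i (s a))) -!big_split /=; apply: eq_bigr => a _.
by rewrite -val_eqE /=; case: ltngtP; case: (s a); rewrite ?b2iT ?b2iF ?mul0r ?mul1r ?addr0 ?add0r.
Qed.

Definition npairs s : int :=
  \sum_(a1 : 'I_n) \sum_(a2 : 'I_n) b2i (s a1) * b2i (s a2) * b2i (a1 < a2)%N.

Lemma npairsE s :
  npairs s = \sum_(a1 : 'I_n) \sum_(a2 : 'I_n) b2i (s a1) * b2i (s a2) * b2i (a2 < a1)%N.
Proof. by rewrite /npairs exchange_big /=; apply: eq_bigr => a1 _; apply: eq_bigr => a2 _; ring. Qed.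

Lemma countz_diag s :
  \sum_(a1 : 'I_n) \sum_(a2 : 'I_n) b2i (s a1) * b2i (s a2) * b2i (a1 == a2) = countz s.
Proof.
apply: eq_bigr => a1 _; rewrite (eq_bigr (fun a2 => b2i (a2 == a1) * (b2i (s a1) * b2i (s a1)))).
  by rewrite sum_b2i_eq; case: (s a1).
by move=> a2 _; rewrite eq_sym; case: eqP => [->|_]; rewrite ?b2iT ?b2iF; ring.
Qed.

Lemma npairs_double s : 2 * npairs s = countz s * countz s - countz s.
Proof.
have pairs3 : \sum_(a1 : 'I_n) \sum_(a2 : 'I_n) b2i (s a1) * b2i (s a2) =
  npairs s + \sum_(a1 : 'I_n) \sum_(a2 : 'I_n) b2i (s a1) * b2i (s a2) * b2i (a2 < a1)%N +
  \sum_(a1 : 'I_n) \sum_(a2 : 'I_n) b2i (s a1) * b2i (s a2) * b2i (a1 == a2).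
  rewrite -!big_split; apply: eq_bigr => a1 _; rewrite -!big_split; apply: eq_bigr => a2 _.
  by rewrite -val_eqE /=; case: ltngtP => _; rewrite ?b2iT ?b2iF; ring.
by rewrite -npairsE countz_diag sum_mul_sum -/(countz s) in pairs3; rewrite pairs3; ring.
Qed.

Section Column.
Variables (s : 'I_n -> bool) (u : 'I_n).
Let below := countz (fun a => (a < u)%N && s a).
Let above := countz (fun a => (u < a)%N && s a).
Let mid := b2i (s u).

Lemma countz_andE (P : 'I_n -> bool) :
  countz (fun a => P a && s a) = \sum_a b2i (s a) * b2i (P a).
Proof. by apply: eq_bigr => a _; rewrite b2iM mulrC. Qed.

(* Pairs a1 < a2 count +1 if they straddle row u and -1 otherwise; straddling pairs factor. *)
Lemma segment_sum : \sum_(a1 : 'I_n) \sum_(a2 : 'I_n) b2i (s a1) * b2i (s a2) *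
    (b2i (a1 < a2)%N * (if (a1 < u < a2)%N then 1 else -1)) = 2 * below * above - npairs s.
Proof.
rewrite /below /above !countz_andE -mulrA -sum_mul_sum /npairs mulr_sumr -sumrB.
apply: eq_bigr => a1 _; rewrite mulr_sumr -sumrB; apply: eq_bigr => a2 _.
by case: (s a1); case: (s a2); rewrite /b2i /=;
  case: (ltngtP a1 a2) => ?; case: (ltngtP a1 u) => ?; case: (ltngtP u a2) => ? /=; lia.
Qed.

Lemma hole_sum : \sum_(a1 : 'I_n) \sum_(a2 : 'I_n) b2i (s a1) * b2i (s a2) *
    (b2i (a2 <= a1)%N * (if (a2 <= u <= a1)%N then 1 else -1)) =
  2 * (above + mid) * (below + mid) - npairs s - countz s.
Proof.
rewrite /below /above /mid -countz_ge -countz_le !countz_andE -mulrA -sum_mul_sum npairsE.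
rewrite -(countz_diag s) mulr_sumr -!sumrB; apply: eq_bigr => a1 _.
rewrite mulr_sumr -!sumrB; apply: eq_bigr => a2 _; rewrite -val_eqE /=.
by case: (s a1); case: (s a2); rewrite /b2i /=;
  case: (ltngtP a1 a2) => ?; case: (ltngtP a1 u) => ?; case: (ltngtP u a2) => ? /=; lia.
Qed.

End Column.
End Counting.

Lemma bin2z k : 2 * ('C(k, 2))%:Z = k%:Z * k%:Z - k%:Z.
Proof. by elim: k => [//|k IHk]; rewrite binS bin1; lia. Qed.

Section SameColumn.
Variables (n : nat) (A : {set 'I_n * 'I_n}) (u v : 'I_n).

Definition column_weight (z a1 a2 : 'I_n) : int :=
  if z == v then b2i (a2 <= a1)%N * (if (a2 <= u <= a1)%N then 1 else -1)
  else b2i (a1 < a2)%N * (if (a1 < u < a2)%N then 1 else -1).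

Definition qq_term (z : 'I_n) : int :=
  (alpha A u z * beta A u z)%:Z - ('C(alpha A u z, 2))%:Z - ('C(beta A u z, 2))%:Z.

Lemma column_sum (z : 'I_n) :
  \sum_(a1 : 'I_n) \sum_(a2 : 'I_n)
    b2i ((a1, z) \in A) * b2i ((a2, z) \in A) * column_weight z a1 a2 =
  qq_term z - b2i (z != v) * b2i ((u, z) \in A) * ((alpha A u z)%:Z + (beta A u z)%:Z)
  + b2i (z == v) * (if (u, z) \in A then 1 else - (alpha A u z)%:Z - (beta A u z)%:Z).
Proof.
set s := fun a : 'I_n => (a, z) \in A.
have ea : (alpha A u z)%:Z = countz (fun a => (a < u)%N && s a) by rewrite -card_countz.
have eb : (beta A u z)%:Z = countz (fun a => (u < a)%N && s a) by rewrite -card_countz.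
have ca := bin2z (alpha A u z); have cb := bin2z (beta A u z).
have pairs := npairs_double s; rewrite (countz_split s u) -ea -eb in pairs.
rewrite /qq_term PoszM /column_weight -/(s u); apply: (@mulfI _ 2) => //.
case: (eqVneq z v) => _; rewrite ?b2iT ?b2iF.
- have := hole_sum s u; rewrite -ea -eb (countz_split s u) -ea -eb => ->.
  by case: (s u) pairs; rewrite ?b2iT ?b2iF => pairs; lia.
- have := segment_sum s u; rewrite -ea -eb => ->.
  by case: (s u) pairs; rewrite ?b2iT ?b2iF => pairs; lia.
Qed.

Lemma flow_weight_same_exit (t1 t2 : 'I_n * 'I_n) :
  flow_weight u v (onehot v) t1 t2 = b2i (t2.2 == t1.2) * column_weight t1.2 t1.1 t2.1.
Proof.
case: t1 t2 => [a1 j1] [a2 j2]; rewrite /flow_weight /admissible /exit_string /row_sign /=.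
have [_ | ne] := eqVneq j1 j2.
  by rewrite /column_weight eqxx !b2iT mulr1 mul1r; case: (j1 == v).
rewrite onehot_eq b2iF mul0r; have [ej1 | _] := eqVneq j1 v; last by rewrite b2iF mulr0 mul0r.
by rewrite -ej1 eq_sym (negbTE ne) b2iF !mul0r.
Qed.

Lemma Sig_straight : Sig A (onehot v) (onehot u) (onehot v) (onehot u) =
  if (u, v) \in A then qq A u - rr A u v - ss A u v + 1
  else qq A u - rr A u v - ss A u v - (alpha A u v)%:Z - (beta A u v)%:Z.
Proof.
rewrite Sig_onehotE eqxx b2iT.
transitivity (\sum_(z : 'I_n) \sum_(a1 : 'I_n) \sum_(a2 : 'I_n)
   b2i ((a1, z) \in A) * b2i ((a2, z) \in A) * column_weight z a1 a2).
  rewrite sum_pair exchange_big /=; apply: eq_bigr => z _; apply: eq_bigr => a1 _.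
  rewrite (eq_bigr (fun t2 => b2i ((a1, z) \in A) *
    (b2i (t2 \in A) * (b2i (t2.2 == z) * column_weight z a1 t2.1)))); last first.
    by move=> t2 _; rewrite flow_weight_same_exit; ring.
  by rewrite -mulr_sumr sum_in_column mulr_sumr; apply: eq_bigr => a2 _; ring.
rewrite (eq_bigr _ (fun z _ => column_sum z)) big_split /= sumrB sum_b2i_eq.
have -> : \sum_(z : 'I_n) b2i (z != v) * b2i ((u, z) \in A) *
    ((alpha A u z)%:Z + (beta A u z)%:Z) = rr A u v + ss A u v.
  symmetry; rewrite /rr /ss -big_split /= big_mkcond /=; apply: eq_bigr => z _.
  by case: (z != v); case: ((u, z) \in A); rewrite /= ?b2iT ?b2iF ?mul0r ?mul1r ?addr0 // addrC.
by rewrite /qq; case: ((u, v) \in A); ring.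
Qed.
End SameColumn.

Lemma signed_countz_below n (s : 'I_n -> bool) (u : 'I_n) :
  \sum_(a : 'I_n) b2i (s a) * (if (a < u)%N then -1 else 1) =
  countz s - 2 * countz (fun a => (a < u)%N && s a).
Proof.
rewrite /countz mulr_sumr -sumrB; apply: eq_bigr => a _.
by case: (s a); case: (a < u)%N; rewrite /b2i /=; lia.
Qed.

Lemma signed_countz_above n (s : 'I_n -> bool) (u : 'I_n) :
  \sum_(a : 'I_n) b2i (s a) * (if (u < a)%N then -1 else 1) =
  countz s - 2 * countz (fun a => (u < a)%N && s a).
Proof.
rewrite /countz mulr_sumr -sumrB; apply: eq_bigr => a _.
by case: (s a); case: (u < a)%N; rewrite /b2i /=; lia.
Qed.

Section MovedColumn.
Variables (n : nat) (A : {set 'I_n * 'I_n}) (u v w : 'I_n).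
Hypothesis neq_vw : v != w.

Lemma flow_weight_moved (t1 t2 : 'I_n * 'I_n) :
  flow_weight u v (onehot w) t1 t2 =
  (b2i (t1.2 == w) * (if (t1.1 < u)%N then -1 else 1)) *
  (b2i (t2.2 == v) * (if (u < t2.1)%N then -1 else 1)).
Proof.
case: t1 t2 => [a1 j1] [a2 j2]; rewrite /flow_weight /admissible /exit_string /row_sign /=.
have [<- | ne] := eqVneq j1 j2.
  rewrite onehot_eq (negbTE neq_vw) b2iF mulr0 mul0r.
  have [-> | _] := eqVneq j1 w; last by rewrite b2iF !mul0r.
  by rewrite eq_sym (negbTE neq_vw) b2iF mul0r mulr0.
by rewrite onehot_eq; case: (j1 == w); case: (j2 == v); rewrite ?b2iT ?b2iF; ring.
Qed.

Lemma Sig_moved : Sig A (onehot v) (onehot u) (onehot w) (onehot u) =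
  match (u, v) \in A, (u, w) \in A with
  | false, false => pp A u v w
  | false, true => pp A u v w + (alpha A u v)%:Z - (beta A u v)%:Z
  | true, false => pp A u v w + (beta A u w)%:Z - (alpha A u w)%:Z
  | true, true => pp A u v w + (beta A u w)%:Z - (alpha A u w)%:Z
                  + (alpha A u v)%:Z - (beta A u v)%:Z + 1
  end.
Proof.
rewrite Sig_onehotE eqxx b2iT.
rewrite (eq_bigr (fun t1 => \sum_(t2 : 'I_n * 'I_n)
   (b2i (t1 \in A) * (b2i (t1.2 == w) * (if (t1.1 < u)%N then -1 else 1))) *
   (b2i (t2 \in A) * (b2i (t2.2 == v) * (if (u < t2.1)%N then -1 else 1))))); last first.
  by move=> t1 _; apply: eq_bigr => t2 _; rewrite flow_weight_moved; ring.
rewrite sum_mul_sum (sum_in_column A w (fun a => if (a < u)%N then -1 else 1)).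
rewrite (sum_in_column A v (fun a => if (u < a)%N then -1 else 1)).
rewrite signed_countz_below signed_countz_above.
rewrite (countz_split (fun a => (a, w) \in A) u) (countz_split (fun a => (a, v) \in A) u).
rewrite -!card_countz /pp.
by case: ((u, v) \in A); case: ((u, w) \in A); rewrite ?b2iT ?b2iF; ring.
Qed.

End MovedColumn.

Theorem mainTheorem12 (n : nat) (A : {set 'I_n * 'I_n})
  (xN xE xS xW : {ffun 'I_n -> bool}) :
  phi_one xN xW ->
  ((xW != xE \/ hw xS != 1%N) -> Sig A xN xE xS xW = 0) /\
  (phi_prop xN xE xS xW ->
   forall u v : 'I_n, xW = onehot u -> xN = onehot v ->
   Sig A xN xE xS xW =
     if (u, v) \in A then qq A u - rr A u v - ss A u v + 1
     else qq A u - rr A u v - ss A u v - (alpha A u v)%:Z - (beta A u v)%:Z) /\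
  (xW = xE -> hw xS = 1%N -> xN != xS ->
   forall u v w : 'I_n, xW = onehot u -> xN = onehot v -> xS = onehot w ->
   Sig A xN xE xS xW =
     match (u, v) \in A, (u, w) \in A with
     | false, false => pp A u v w
     | false, true => pp A u v w + (alpha A u v)%:Z - (beta A u v)%:Z
     | true, false => pp A u v w + (beta A u w)%:Z - (alpha A u w)%:Z
     | true, true => pp A u v w + (beta A u w)%:Z - (alpha A u w)%:Z
                     + (alpha A u v)%:Z - (beta A u v)%:Z + 1
     end).
Proof.
case=> /hw1P[v0 eN] /hw1P[u0 eW]; split; [|split].
- by rewrite eN eW; apply: Sig_onehot_eq0.
- by case=> <- <- u v -> ->; apply: Sig_straight.
- move=> <- _ neNS u v w eWu eNv eSw; rewrite eWu eNv eSw in neNS *.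
  by apply: Sig_moved; rewrite -onehot_eq.
Qed.
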